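(* Under all the hypotheses of the following setting: $C\subseteq\mathbb{R}^n$ nonempty closed convex; $F$ continuously differentiable; $x^*$ a solution of VIP$(F,C)$; a neighborhood $X$ of $x^*$ and constants $L_1,L_2,\mu>0$ with $\|F(x)-F(y)\|\le L_1\|x-y\|$, $\|\nabla F(x)-\nabla F(y)\|\le L_2\|x-y\|$ for $x,y\in X$ and $\langle\nabla F(x)d,d\rangle\ge\mu\|d\|^2$ for $x\in X$, $d\in\mathbb{R}^n$; sequences $\{x_k\}\subset C$ with $x_k\to x^*$, $B_k$, $\mu_k>0$, $\rho_k\ge0$, $\delta_k>0$, inexact solutions $z_k\in C$ and exact solutions $\hat z_k$ of VIP$(\varphi_k,C)$; and constants $D,C_1,C_2>0$ such that for all sufficiently large $k$: $\|B_k-\nabla F(x_k)\|\le D$; $\mu_k=O(r_k)$, $\mu_k\le C_1\|x_k-x^*\|$, $\rho_k\to0$; $B_k+\mu_kI$ positive definite with $(1+\|B_k+\mu_kI\|)/c_k\le C_2$; $\|(B_k-\nabla F(x_k))(z_k-x_k)\|\le\delta_k\|z_k-x_k\|$, $\mu_k<\mu/2$, $\delta_k\le\mu/16$. Then for every $\alpha>0$ there exist constants $L_1',L_2',L_3',L_4',L_5'>0$ such that for all sufficiently large $k$, $$f_\alpha(z_k)\le L_1'\|x_k-x^*\|^4+(L_2'\delta_k+L_3')\|x_k-x^*\|^3+(L_4'\delta_k+L_5'\delta_k^2)\|x_k-x^*\|^2.$$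
   Context: VIP$(F,C)$: find $x^*\in C$ with $\langle F(x^* ),x-x^*\rangle\ge0$ for all $x\in C$. $P_C$ is the Euclidean projection onto $C$. $r_k=\|x_k-P_C(x_k-F(x_k))\|$. For $\alpha>0$ the merit function is $f_\alpha(x)=\max_{y\in C}\{-\langle F(x),y-x\rangle-\tfrac{\alpha}{2}\|y-x\|^2\}$. For each $k$, $\varphi_k(z)=F(x_k)+(B_k+\mu_kI)(z-x_k)$; $\hat z_k\in C$ is the unique solution of VIP$(\varphi_k,C)$: $\langle\varphi_k(\hat z_k),x-\hat z_k\rangle\ge0$ for all $x\in C$. With $e_k=z_k-P_C(z_k-\varphi_k(z_k))$, the inexact solutions $z_k\in C$ satisfy $\|e_k\|\le\rho_k\mu_k\|z_k-x_k\|$ and $\langle e_k,\varphi_k(z_k)+z_k-x_k\rangle\le\rho_k\mu_k\|z_k-x_k\|^2$. $c_k$ is the smallest eigenvalue of the symmetric part of $B_k+\mu_kI$. *)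

From HB Require Import structures.
From mathcomp Require Import all_boot all_order all_algebra.
From mathcomp Require Import all_classical all_reals all_analysis.
Set Implicit Arguments. Unset Strict Implicit. Unset Printing Implicit Defensive.
Import Order.TTheory GRing.Theory Num.Theory.
Import numFieldNormedType.Exports.
Local Open Scope classical_set_scope.
Local Open Scope ring_scope.

Section Defs.
Variables (R : realType) (n : nat).
Implicit Types (x y d : 'cV[R]_n) (A : 'M[R]_n) (C : set 'cV[R]_n).

Definition dotv x y : R := \sum_(i < n) x i 0 * y i 0.
Definition vnorm x : R := Num.sqrt (dotv x x).

Definition opnorm A : R := sup [set vnorm (A *m x) | x in [set x | vnorm x <= 1]].

(* Euclidean projection onto C (the unique nearest point when C is nonempty closed convex) *)
Definition projC C x : 'cV[R]_n :=
  xget 0 [set p | C p /\ forall y, C y -> vnorm (x - p) <= vnorm (x - y)].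

Definition vip_sol (G : 'cV[R]_n -> 'cV[R]_n) C xs : Prop :=
  C xs /\ forall y, C y -> 0 <= dotv (G xs) (y - xs).

Definition merit (F : 'cV[R]_n -> 'cV[R]_n) C (alpha : R) x : R :=
  sup [set - dotv (F x) (y - x) - alpha / 2 * vnorm (y - x) ^+ 2 | y in C].

Definition phi (F : 'cV[R]_n -> 'cV[R]_n) A (m : R) xk (z : 'cV[R]_n) : 'cV[R]_n :=
  F xk + (A + m%:M) *m (z - xk).

Definition posdef A : Prop := forall x, x != 0 -> 0 < dotv x (A *m x).

Definition min_eig_sym A : R :=
  inf [set a : R | eigenvalue ((2%:R)^-1 *: (A + A^T)) a].

Definition C1_jacobian (F : 'cV[R]_n -> 'cV[R]_n) (JF : 'cV[R]_n -> 'M[R]_n) : Prop :=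
  (forall x (e : R), 0 < e -> exists2 del : R, 0 < del & forall y,
     vnorm (y - x) < del -> vnorm (F y - F x - JF x *m (y - x)) <= e * vnorm (y - x)) /\
  (forall x (e : R), 0 < e -> exists2 del : R, 0 < del & forall y,
     vnorm (y - x) < del -> opnorm (JF y - JF x) <= e).
End Defs.

(* Write d = z_k - x_k, u = x_k - xs and e = z_k - P_C(z_k - phi_k(z_k)).
   The projection inequality at xs, combined with the variational inequality
   of xs at P_C(z_k - phi_k(z_k)), gives <phi_k(z_k) - F(xs) - e, d + u - e> <= 0.
   Strong monotonicity of the Jacobian and the smallness of B_k - JF(x_k), mu_k
   and rho_k turn this into mu/2 |d|^2 <= a |u| |d| + L1 |u|^2, so |d| = O(|u|).
   The merit function at z_k is at most G^2/(2 alpha) + <phi_k(z_k), e> with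
   G = |phi_k(z_k) - F(z_k) - e|.  A Taylor estimate with the Lipschitz Jacobian
   gives G = O(|u|^2 + delta_k |u|), and the inexactness criterion gives
   <phi_k(z_k), e> = O(rho_k mu_k |d|^2) = O(|u|^3). *)

From HB Require Import structures.
From mathcomp Require Import all_boot all_order all_algebra.
From mathcomp Require Import all_classical all_reals all_analysis.
From mathcomp Require Import ring lra.
Set Implicit Arguments. Unset Strict Implicit.
Import Order.TTheory GRing.Theory Num.Theory.
Import numFieldNormedType.Exports.
Local Open Scope classical_set_scope.
Local Open Scope ring_scope.

Section InnerProduct.
Variables (R : realType) (n : nat).
Implicit Types (x y w : 'cV[R]_n).

Lemma dotvC x y : dotv x y = dotv y x.
Proof. by apply: eq_bigr => i _; rewrite mulrC. Qed.

Lemma dotvDl x y w : dotv (x + y) w = dotv x w + dotv y w.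
Proof. by rewrite /dotv -big_split; apply: eq_bigr => i _; rewrite mxE mulrDl. Qed.

Lemma dotvZl (a : R) x y : dotv (a *: x) y = a * dotv x y.
Proof. by rewrite /dotv mulr_sumr; apply: eq_bigr => i _; rewrite mxE mulrA. Qed.

Lemma dotvNl x y : dotv (- x) y = - dotv x y.
Proof. by rewrite -scaleN1r dotvZl mulN1r. Qed.

Lemma dotvBl x y w : dotv (x - y) w = dotv x w - dotv y w.
Proof. by rewrite dotvDl dotvNl. Qed.

Lemma dotvDr x y w : dotv w (x + y) = dotv w x + dotv w y.
Proof. by rewrite dotvC dotvDl !(dotvC w). Qed.

Lemma dotvNr x y : dotv x (- y) = - dotv x y.
Proof. by rewrite dotvC dotvNl dotvC. Qed.

Lemma dotvBr x y w : dotv w (x - y) = dotv w x - dotv w y.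
Proof. by rewrite dotvDr dotvNr. Qed.

Lemma dotvZr (a : R) x y : dotv x (a *: y) = a * dotv x y.
Proof. by rewrite dotvC dotvZl dotvC. Qed.

Lemma dotv0l x : dotv 0 x = 0.
Proof. by rewrite -(scale0r 0) dotvZl mul0r. Qed.

Lemma dotv0r x : dotv x 0 = 0.
Proof. by rewrite dotvC dotv0l. Qed.

Definition dotvE := (dotvDl, dotvDr, dotvBl, dotvBr, dotvNl, dotvNr, dotvZl, dotvZr).

Lemma dotvv_ge0 x : 0 <= dotv x x.
Proof. by apply: sumr_ge0 => i _; rewrite -expr2 sqr_ge0. Qed.

Lemma dotvv_eq0 x : dotv x x = 0 -> x = 0.
Proof.
move=> x0; apply/matrixP => i j; rewrite ord1 mxE.
have xx0 (k : 'I_n) : xpredT k -> 0 <= x k 0 * x k 0 by rewrite -expr2 sqr_ge0.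
have /eqP := @psumr_eq0P R _ xpredT (fun k => x k 0 * x k 0) xx0 x0 i isT.
by rewrite mulf_eq0 orbb => /eqP.
Qed.

Lemma vnorm_ge0 x : 0 <= vnorm x.
Proof. exact: sqrtr_ge0. Qed.

Lemma vnorm_sqr x : vnorm x ^+ 2 = dotv x x.
Proof. by rewrite sqr_sqrtr // dotvv_ge0. Qed.

Lemma vnorm0_eq0 x : vnorm x = 0 -> x = 0.
Proof. by move=> x0; apply: dotvv_eq0; rewrite -vnorm_sqr x0 expr0n. Qed.

Lemma vnorm0 : vnorm (0 : 'cV[R]_n) = 0.
Proof. by rewrite /vnorm dotv0l sqrtr0. Qed.

Lemma vnorm_gt0 x : vnorm x != 0 -> 0 < vnorm x.
Proof. by move=> x0; rewrite lt_neqAle eq_sym x0 vnorm_ge0. Qed.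

Lemma vnormZ (a : R) x : vnorm (a *: x) = `|a| * vnorm x.
Proof. by rewrite /vnorm dotvZl dotvZr mulrA -expr2 sqrtrM ?sqr_ge0 // sqrtr_sqr. Qed.

Lemma vnormN x : vnorm (- x) = vnorm x.
Proof. by rewrite -scaleN1r vnormZ normrN1 mul1r. Qed.

Lemma vdistC x y : vnorm (x - y) = vnorm (y - x).
Proof. by rewrite -vnormN opprB. Qed.

Lemma vnorm_subZ_sqr x y (t : R) :
  vnorm (x - t *: y) ^+ 2 = vnorm x ^+ 2 - 2 * t * dotv x y + t ^+ 2 * vnorm y ^+ 2.
Proof. by rewrite !vnorm_sqr !dotvE (dotvC y x); ring. Qed.

Lemma dotv_le x y : dotv x y <= vnorm x * vnorm y.
Proof.
have [/vnorm0_eq0->|/vnorm_gt0 xp] := eqVneq (vnorm x) 0.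
  by rewrite dotv0l vnorm0 mul0r.
have [/vnorm0_eq0->|/vnorm_gt0 yp] := eqVneq (vnorm y) 0.
  by rewrite dotv0r vnorm0 mulr0.
(* expand 0 <= | |y| x - |x| y |^2 and divide by |x| |y| *)
have := dotvv_ge0 (vnorm y *: x - vnorm x *: y).
rewrite !dotvE -!vnorm_sqr (dotvC y x) => h.
rewrite -subr_ge0 -(pmulr_rge0 _ (mulr_gt0 xp yp)); nra.
Qed.

Lemma dotv_ge x y : - (vnorm x * vnorm y) <= dotv x y.
Proof. by rewrite lerNl -dotvNl -(vnormN x) dotv_le. Qed.

Lemma ler_vnormD x y : vnorm (x + y) <= vnorm x + vnorm y.
Proof.
rewrite -ler_sqr ?nnegrE ?addr_ge0 ?vnorm_ge0 //.
rewrite vnorm_sqr !dotvE (dotvC y x) -!vnorm_sqr.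
have := dotv_le x y; lra.
Qed.

Lemma ler_vnormB x y : vnorm (x - y) <= vnorm x + vnorm y.
Proof. by rewrite -(vnormN y) ler_vnormD. Qed.

Lemma ler_vdist_add x y w : vnorm (x - y) <= vnorm (x - w) + vnorm (w - y).
Proof. by rewrite -[x - y](subrKA w) ler_vnormD. Qed.

Lemma coord_le_vnorm x i : `|x i 0| <= vnorm x.
Proof.
rewrite -sqrtr_sqr ler_sqrt ?dotvv_ge0 // /dotv (bigD1 i) //= -expr2 lerDl.
by apply: sumr_ge0 => j _; rewrite -expr2 sqr_ge0.
Qed.

Lemma vnorm_le_coord x (c : R) : 0 <= c -> (forall i, `|x i 0| <= c) ->
  vnorm x <= n%:R * c.
Proof.
move=> c0 xc; rewrite -ler_sqr ?nnegrE ?vnorm_ge0 ?mulr_ge0 // vnorm_sqr.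
apply: (@le_trans _ _ (\sum_(i < n) c ^+ 2)).
  by apply: ler_sum => i _; rewrite -expr2 -real_normK ?num_real // lerXn2r ?nnegrE.
rewrite sumr_const card_ord -[_ *+ n]mulr_natl exprMn ler_wpM2r ?sqr_ge0 //.
by rewrite -natrX ler_nat; case: n => // m; rewrite expnS leq_pmulr.
Qed.

End InnerProduct.

Section OperatorNorm.
Variables (R : realType) (n : nat).
Implicit Types (v : 'cV[R]_n) (M : 'M[R]_n).

Lemma vnorm_mulmx_bounded M :
  exists2 K : R, 0 <= K & forall v, vnorm (M *m v) <= K * vnorm v.
Proof.
pose S := \sum_(i < n) \sum_(j < n) `|M i j|.
have S0 : 0 <= S by do 2![apply: sumr_ge0 => ? _].
exists (n%:R * S); first by rewrite mulr_ge0.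
move=> v; rewrite -mulrA; apply: vnorm_le_coord => [|i]; first by rewrite mulr_ge0 ?vnorm_ge0.
rewrite mxE; apply: le_trans (ler_norm_sum _ _ _) _.
apply: (@le_trans _ _ (\sum_(j < n) `|M i j| * vnorm v)).
  by apply: ler_sum => j _; rewrite normrM ler_wpM2l ?coord_le_vnorm.
rewrite -mulr_suml ler_wpM2r ?vnorm_ge0 // /S [leRHS](bigD1 i) //= lerDl.
by do 2![apply: sumr_ge0 => ? _].
Qed.

Lemma vnorm_mulmx_le M v : vnorm (M *m v) <= opnorm M * vnorm v.
Proof.
pose E := [set vnorm (M *m x) | x in [set x : 'cV[R]_n | vnorm x <= 1]].
have supE : has_sup E.
  split; first by exists (vnorm (M *m 0)), 0 => //=; rewrite vnorm0.
  have [K K0 MK] := vnorm_mulmx_bounded M.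
  exists K => _ [y /= y1 <-]; apply: le_trans (MK y) _.
  by rewrite -[leRHS]mulr1 ler_wpM2l.
have [/vnorm0_eq0->|/vnorm_gt0 vp] := eqVneq (vnorm v) 0.
  by rewrite mulmx0 vnorm0 mulr0.
have Ev : E (vnorm (M *m ((vnorm v)^-1 *: v))).
  exists ((vnorm v)^-1 *: v) => //=.
  by rewrite vnormZ ger0_norm ?invr_ge0 ?vnorm_ge0 // mulVf ?gt_eqF.
have := sup_upper_bound supE Ev.
rewrite -scalemxAr vnormZ ger0_norm ?invr_ge0 ?vnorm_ge0 //.
by rewrite -ler_pdivrMr // mulrC.
Qed.

Lemma mulmx_shifted_split (A J : 'M[R]_n) (m : R) (d : 'cV[R]_n) :
  (A + m%:M) *m d = J *m d + (A - J) *m d + m *: d.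
Proof. by rewrite mulmxBl addrCA subrr addr0 mulmxDl mul_scalar_mx. Qed.

End OperatorNorm.

Section Topology.
Variables (R : realType) (n : nat).
Implicit Types (v y : 'cV[R]_n) (K : set 'cV[R]_n).

Lemma mx_norm_coord p q (A : 'M[R]_(p, q)) i j : `|A i j| <= `|A|.
Proof.
change (`|A i j| <= mx_norm A); rewrite mx_normrE.
exact: (le_bigmax _ (fun ij : 'I_p * 'I_q => `|A ij.1 ij.2|) (i, j)).
Qed.

Lemma mx_norm_trmx p q (A : 'M[R]_(p, q)) : `|A^T| = `|A|.
Proof.
have le_tr m k (M : 'M[R]_(m, k)) : `|M^T| <= `|M|.
  change (mx_norm M^T <= `|M|); rewrite mx_normrE.
  by apply: bigmax_le => // ij _; rewrite mxE mx_norm_coord.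
by apply/le_anti/andP; split; [|rewrite -{1}[A]trmxK]; apply: le_tr.
Qed.

Lemma mx_norm_le_vnorm v : `|v| <= vnorm v.
Proof.
change (mx_norm v <= vnorm v); rewrite mx_normrE.
apply: bigmax_le => [|[i j] _ /=]; first exact: vnorm_ge0.
by rewrite ord1; apply: coord_le_vnorm.
Qed.

Lemma vnorm_le_mx_norm v : vnorm v <= n%:R * `|v|.
Proof. by apply: vnorm_le_coord => // i; apply: mx_norm_coord. Qed.

Lemma continuous_trmx p q : continuous (@trmx R p q).
Proof.
move=> A; apply/(@cvgrPdist_lt _ _ _ (nbhs A) (nbhs_filter A)) => e e0.
have := (@cvgrPdist_lt _ _ _ (nbhs A) (nbhs_filter A) id A).1 (@cvg_id _ _) e e0.
by apply: (@filterS _ _ (nbhs_filter A)) => B /=; rewrite -linearB /= mx_norm_trmx.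
Qed.

Lemma cvg_vnorm_lt T (F : set_system T) {FF : Filter F} (f : T -> 'cV[R]_n) y :
  f @ F --> y -> forall e, 0 < e -> \forall t \near F, vnorm (f t - y) < e.
Proof.
move=> fy e e0; have e'0 : 0 < e / (n%:R + 1) by rewrite divr_gt0 // ltr_wpDl.
move/cvgrPdist_lt: fy => /(_ _ e'0); apply: filterS => t.
rewrite ltr_pdivlMr ?ltr_wpDl // => yt; apply: le_lt_trans (vnorm_le_mx_norm _) _.
by rewrite distrC; apply: le_lt_trans yt; rewrite mulrDr mulr1 mulrC lerDl.
Qed.

Lemma continuous_vdist v : continuous (fun y => vnorm (v - y)).
Proof.
move=> y0; apply/(@cvgrPdist_lt _ _ _ (nbhs y0) (nbhs_filter y0)) => e e0.
have := cvg_vnorm_lt (FF := nbhs_filter y0) (@cvg_id _ (nbhs y0)) e0.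
apply: filterS => y /= yy0.
have := ler_vdist_add v y0 y; have := ler_vdist_add v y y0.
rewrite (vdistC y0 y) ltr_norml; lra.
Qed.

Lemma nbhs_vnorm_ball (X : set 'cV[R]_n) y : nbhs y X ->
  exists2 r : R, 0 < r & forall v, vnorm (v - y) < r -> X v.
Proof.
move=> /nbhs_ballP[r r0 ry]; exists r => // v vy; apply: ry.
rewrite -ball_normE /ball_ /=; apply: le_lt_trans (mx_norm_le_vnorm _) _.
by rewrite vdistC.
Qed.

Lemma compact_vnorm_bounded K :
  closed K -> (exists M, forall y, K y -> vnorm y <= M) -> compact K.
Proof.
move=> clK [M KM].
pose Kr := (@trmx R 1 n) @^-1` K.
have clKr : closed Kr by apply: preimage_closed => // r _; apply: continuous_trmx.
have bKr : bounded_set Kr.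
  apply: filterS (nbhs_pinfty_ge (num_real M)) => M' /= MM' r Kr_r.
  rewrite -mx_norm_trmx; apply: le_trans (mx_norm_le_vnorm _) _.
  exact: le_trans (KM _ Kr_r) MM'.
have -> : K = trmx @` Kr.
  apply/seteqP; split => [y Ky|_ [r Kr_r <-] //].
  by exists y^T; rewrite /Kr /= trmxK.
apply: continuous_compact (bounded_closed_compact bKr clKr).
exact: continuous_subspaceT (@continuous_trmx 1 n).
Qed.

End Topology.

Section NearestPoint.
Variables (R : realType) (n : nat).
Implicit Types (v y : 'cV[R]_n) (C : set 'cV[R]_n).

Lemma nearest_point_exists C v : C !=set0 -> closed C ->
  exists2 p, C p & forall y, C y -> vnorm (v - p) <= vnorm (v - y).
Proof.
move=> [c Cc] clC.
pose K := C `&` (fun y => vnorm (v - y)) @^-1` [set t | t <= vnorm (v - c)].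
have clK : closed K.
  apply: closedI => //; apply: preimage_closed; last exact: closed_le.
  by move=> y _; apply: continuous_vdist.
have cK : compact K.
  apply: (compact_vnorm_bounded clK); exists (vnorm v + vnorm (v - c)) => y [_ yc].
  rewrite -[y in vnorm y](subKr v).
  by apply: le_trans (ler_vnormB _ _) _; rewrite lerD2l.
have [|p] := compact_EVT_min _ cK (continuous_subspaceT (@continuous_vdist _ _ v)).
  by exists c; split => /=.
rewrite in_setE => -[Cp _] pmin; exists p => // y Cy.
have [yc|/ltW cy] := leP (vnorm (v - y)) (vnorm (v - c)).
  by apply: pmin; rewrite in_setE.
by apply: le_trans cy; apply: pmin; rewrite in_setE; split => /=.
Qed.

Lemma nearest_point_obtuse C v p : convex_set C -> C p ->
  (forall y, C y -> vnorm (v - p) <= vnorm (v - y)) ->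
  forall y, C y -> dotv (v - p) (y - p) <= 0.
Proof.
move=> cvC Cp pmin y Cy; set a := v - p; set b := y - p.
have small t : 0 < t -> t <= 1 -> 2 * dotv a b <= t * vnorm b ^+ 2.
  move=> t0 t1.
  have /= := cvC y p (Itv01 (ltW t0) t1); rewrite !in_setE => /(_ Cy Cp) /pmin.
  have -> : v - (t *: y + (1 - t) *: p) = a - t *: b.
    by apply/matrixP => i j; rewrite !mxE; lra.
  rewrite -ler_sqr ?nnegrE ?vnorm_ge0 // vnorm_subZ_sqr => h.
  by rewrite -(ler_pM2l t0); lra.
rewrite leNgt; apply/negP => ab0; have bb0 := sqr_ge0 (vnorm b).
have t0 : 0 < dotv a b / (vnorm b ^+ 2 + dotv a b) by rewrite divr_gt0 ?ltr_wpDl.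
have /small : dotv a b / (vnorm b ^+ 2 + dotv a b) <= 1.
  by rewrite ler_pdivrMr ?ltr_wpDl // mul1r lerDr.
rewrite mulrAC ler_pdivlMr ?ltr_wpDl // => /(_ t0); nra.
Qed.

Lemma projC_spec C v : C !=set0 -> closed C -> convex_set C ->
  C (projC C v) /\ forall y, C y -> dotv (v - projC C v) (y - projC C v) <= 0.
Proof.
move=> C0 clC cvC.
have [p Cp pmin] := nearest_point_exists v C0 clC.
have : exists p, C p /\ forall y, C y -> vnorm (v - p) <= vnorm (v - y) by exists p.
move=> /(xgetPex 0); rewrite -/(projC C v) => -[Cpr prmin].
by split=> //; apply: nearest_point_obtuse.
Qed.

End NearestPoint.

Section Segment.
Variables (R : realType) (n : nat) (g : R -> 'cV[R]_n) (K : R).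
Hypothesis g0 : g 0 = 0.
Hypothesis local_lipschitz : forall s, 0 <= s <= 1 -> exists2 del, 0 < del &
  forall t, 0 <= t <= 1 -> `|t - s| < del -> vnorm (g t - g s) <= K * `|t - s|.

Let linear_upto s := forall t, 0 <= t <= s -> vnorm (g t) <= K * t.

Lemma vnorm_le_local_lipschitz : vnorm (g 1) <= K.
Proof.
have step a b : vnorm (g a) <= K * a -> vnorm (g b - g a) <= K * (b - a) ->
    vnorm (g b) <= K * b.
  by move=> ga gab; have := ler_vdist_add (g b) 0 (g a); rewrite !subr0; lra.
(* continuous induction: the supremum of the times up to which the linear
   bound holds cannot stop short of 1 *)
pose S := [set s | 0 <= s <= 1 /\ linear_upto s].
have S0 : S 0.
  split=> [|t /andP[t0 t0']]; first by rewrite lexx ler01.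
  have -> : t = 0 by apply/le_anti; rewrite t0' t0.
  by rewrite g0 vnorm0 mulr0.
have supS : has_sup S by split; [exists 0 | exists 1 => s [/andP[]]].
set sig := sup S.
have sig0 : 0 <= sig by apply: sup_upper_bound.
have sig1 : sig <= 1 by apply: ge_sup; [exists 0 | move=> s [/andP[]]].
have below t : 0 <= t < sig -> vnorm (g t) <= K * t.
  move=> /andP[t0 tsig].
  have [s [_ s_upto] ts] := sup_adherent (eps := sig - t) (ltac:(by rewrite subr_gt0)) supS.
  by apply: s_upto; rewrite t0 /=; rewrite -/sig in ts; lra.
have [del del0 near_sig] := local_lipschitz (s := sig) (ltac:(by rewrite sig0)).
have at_sig : vnorm (g sig) <= K * sig.
  have [->|sig_neq0] := eqVneq sig 0; first by rewrite g0 vnorm0 mulr0.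
  pose t := Num.max 0 (sig - del / 2).
  have tsig : t < sig by rewrite gt_max lt_neqAle eq_sym sig_neq0 sig0; lra.
  have t0 : 0 <= t by rewrite le_max lexx.
  apply: (step t); first by apply: below; rewrite t0.
  have dist_t : `|t - sig| = sig - t by rewrite distrC ger0_norm ?subr_ge0 ?ltW.
  have := near_sig t; rewrite dist_t vdistC; apply; first by rewrite t0; lra.
  have : sig - del / 2 <= t by rewrite le_max lexx orbT.
  lra.
have sig_eq1 : sig = 1.
  apply/eqP; rewrite eq_le sig1 /= leNgt; apply/negP => sig_lt1.
  pose t1 := Num.min 1 (sig + del / 2).
  have sig_t1 : sig < t1 by rewrite lt_min sig_lt1 /=; lra.
  suff /(sup_upper_bound supS) : S t1 by rewrite -/sig; lra.
  split=> [|t /andP[t0 t_t1]]; first by rewrite (le_trans sig0 (ltW sig_t1)) ge_min lexx.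
  have [tsig|sigt] := ltP t sig; first by apply: below; rewrite t0.
  apply: (step sig) => //.
  have dist_t : `|t - sig| = t - sig by rewrite ger0_norm ?subr_ge0.
  have := near_sig t; rewrite dist_t; apply.
    by rewrite t0 (le_trans t_t1) // ge_min lexx.
  have : t1 <= sig + del / 2 by rewrite ge_min lexx orbT.
  lra.
by rewrite sig_eq1 mulr1 in at_sig.
Qed.

End Segment.

Section Taylor.
Variables (R : realType) (n : nat).
Variables (F : 'cV[R]_n -> 'cV[R]_n) (JF : 'cV[R]_n -> 'M[R]_n).
Variables (X : set 'cV[R]_n) (xs : 'cV[R]_n) (r L1 L2 : R).
Hypothesis F_C1 : C1_jacobian F JF.
Hypothesis X_ball : forall u, vnorm (u - xs) < r -> X u.
Hypothesis F_lip : forall u v, X u -> X v -> vnorm (F u - F v) <= L1 * vnorm (u - v).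
Hypothesis JF_lip : forall u v, X u -> X v -> opnorm (JF u - JF v) <= L2 * vnorm (u - v).
Hypothesis L2_gt0 : 0 < L2.

Lemma vnorm_jacobian_le x v : vnorm (x - xs) < r ->
  vnorm (JF x *m v) <= (L1 + 1) * vnorm v.
Proof.
move=> xr; have [/vnorm0_eq0->|/vnorm_gt0 vp] := eqVneq (vnorm v) 0.
  by rewrite mulmx0 vnorm0 mulr0.
(* compare [JF x] with a difference quotient of [F] of first-order error 1 *)
have [del del0 Fdiff] := F_C1.1 x 1 ltr01.
pose s := Num.min del (r - vnorm (x - xs)) / 2.
have s0 : 0 < s by rewrite divr_gt0 // lt_min del0 subr_gt0.
have s_del : s < del.
  have : s * 2 <= del by rewrite divfK ?ge_min ?lexx.
  lra.
have s_r : s < r - vnorm (x - xs).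
  have : s * 2 <= r - vnorm (x - xs) by rewrite divfK ?ge_min ?lexx ?orbT.
  lra.
pose t := s / vnorm v.
have t0 : 0 < t by rewrite divr_gt0.
have tvs : t * vnorm v = s by rewrite divfK ?gt_eqF.
have tv : vnorm (t *: v) = s by rewrite vnormZ gtr0_norm.
have step : x + t *: v - x = t *: v by rewrite addrC addKr.
have y_r : vnorm (x + t *: v - xs) < r.
  rewrite addrAC; apply: le_lt_trans (ler_vnormD _ _) _; rewrite tv; lra.
have rem := Fdiff (x + t *: v); rewrite step tv mul1r in rem.
have lip := F_lip (X_ball y_r) (X_ball xr); rewrite step tv in lip.
have := ler_vdist_add (JF x *m (t *: v)) 0 (F (x + t *: v) - F x).
rewrite !subr0 (vdistC (JF x *m _)) -scalemxAr vnormZ gtr0_norm // => tJ.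
rewrite -(ler_pM2l t0) mulrCA tvs; have := rem s_del; rewrite -scalemxAr; lra.
Qed.

Lemma taylor_remainder_le x h :
  (forall t, 0 <= t <= 1 -> vnorm (x + t *: h - xs) < r) ->
  vnorm (F (x + h) - F x - JF x *m h) <= 2 * L2 * vnorm h ^+ 2.
Proof.
move=> seg; have [/vnorm0_eq0->|/vnorm_gt0 hp] := eqVneq (vnorm h) 0.
  by rewrite addr0 mulmx0 !subrr vnorm0 mulr_ge0 ?sqr_ge0 ?mulr_ge0 ?ltW.
(* the remainder along the segment is locally Lipschitz with constant 2 L2 |h|^2 *)
pose g t := F (x + t *: h) - F x - t *: (JF x *m h).
have x_r : vnorm (x - xs) < r by have := seg 0; rewrite scale0r addr0 lexx ler01; apply.
suff : vnorm (g 1) <= 2 * L2 * vnorm h ^+ 2 by rewrite /g !scale1r.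
apply: vnorm_le_local_lipschitz.
  by rewrite /g !scale0r addr0 subrr subr0.
move=> s s01; set y := x + s *: h.
have y_r : vnorm (y - xs) < r by apply: seg.
have [del del0 Fdiff] := F_C1.1 y (L2 * vnorm h) (mulr_gt0 L2_gt0 hp).
exists (del / vnorm h) => [|t t01 ts]; first by rewrite divr_gt0.
have ty : x + t *: h - y = (t - s) *: h by rewrite opprD addrACA subrr add0r scalerBl.
have -> : g t - g s = (F (x + t *: h) - F y - JF y *m ((t - s) *: h))
    + (t - s) *: ((JF y - JF x) *m h).
  rewrite /g -!scalemxAr mulmxBl scalerBl scalerBr.
  by apply/matrixP => i j; rewrite !mxE; lra.
apply: le_trans (ler_vnormD _ _) _; rewrite vnormZ.
have rem : vnorm (F (x + t *: h) - F y - JF y *m ((t - s) *: h))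
    <= L2 * vnorm h ^+ 2 * `|t - s|.
  have := Fdiff (x + t *: h); rewrite ty vnormZ -ltr_pdivlMr // => /(_ ts).
  by have -> : L2 * vnorm h ^+ 2 * `|t - s| = L2 * vnorm h * (`|t - s| * vnorm h) by ring.
have dJ : vnorm ((JF y - JF x) *m h) <= L2 * vnorm h ^+ 2.
  apply: le_trans (vnorm_mulmx_le _ _) _.
  have yx : vnorm (y - x) <= vnorm h.
    rewrite /y addrC addKr vnormZ ger0_norm; last by case/andP: s01.
    by rewrite ler_piMl ?vnorm_ge0 //; case/andP: s01.
  apply: le_trans (ler_wpM2r (vnorm_ge0 h) (JF_lip (X_ball y_r) (X_ball x_r))) _.
  by rewrite expr2 mulrA ler_pM2r // ler_pM2l.
have := ler_wpM2l (normr_ge0 (t - s)) dJ; lra.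
Qed.

End Taylor.

Section RealInequalities.
Variable R : realType.
Implicit Types a b c s t w : R.

Lemma le_of_quadratic_le a b c s t : 0 < c -> 0 <= a -> 0 <= b -> 0 <= s -> 0 <= t ->
  c / 2 * t ^+ 2 <= a * s * t + b * s ^+ 2 -> t <= (2 * (a + b) / c + 1) * s.
Proof.
move=> c0 a0 b0 s0 t0 quad.
have ab_s : 0 <= 2 * (a + b) / c * s.
  by apply: mulr_ge0 s0; apply: divr_ge0 (ltW c0); lra.
have [ts|st] := leP t s; first by lra.
have t_gt0 : 0 < t by apply: le_lt_trans st.
have : c / 2 * t * t <= (a + b) * s * t.
  have := ler_wpM2l (mulr_ge0 b0 s0) (ltW st).
  by rewrite !expr2 in quad; lra.
rewrite ler_pM2r // => ts.
have : t <= 2 * (a + b) / c * s by rewrite mulrAC ler_pdivlMr //; lra.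
lra.
Qed.

Lemma mul_sub_sqr_le a w c : 0 < c -> a * w - c / 2 * w ^+ 2 <= a ^+ 2 / (2 * c).
Proof.
move=> c0; rewrite -subr_ge0.
have -> : a ^+ 2 / (2 * c) - (a * w - c / 2 * w ^+ 2) = (a - c * w) ^+ 2 / (2 * c).
  by field; rewrite gt_eqF.
by rewrite divr_ge0 ?sqr_ge0 ?mulr_ge0 ?ltW.
Qed.

End RealInequalities.

Section ProjectionResidual.
Variables (R : realType) (n : nat) (C : set 'cV[R]_n).
Hypotheses (C0 : C !=set0) (clC : closed C) (cvC : convex_set C).
Implicit Types (V G e d u w z y : 'cV[R]_n).

Lemma dotv_perturbed_le V G e d u : dotv (V + G - e) (d + u - e) <= 0 ->
  dotv V d <= vnorm V * (vnorm u + vnorm e)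
              + (vnorm G + vnorm e) * (vnorm d + vnorm u) + vnorm G * vnorm e.
Proof.
rewrite !dotvE (dotvC e d) (dotvC e u) => vi.
have := dotv_ge V u; have := dotv_le V e; have := dotv_ge G d; have := dotv_ge G u.
have := dotv_le G e; have := dotv_le d e; have := dotv_le u e; have := dotvv_ge0 e.
lra.
Qed.

Lemma proj_residual_sol_le0 F xs w z : vip_sol F C xs ->
  dotv (w - (z - projC C (z - w)) - F xs) (projC C (z - w) - xs) <= 0.
Proof.
move=> [Cxs xs_sol]; have [Cp p_obtuse] := projC_spec (z - w) C0 clC cvC.
by move: (p_obtuse _ Cxs) (xs_sol _ Cp); rewrite !dotvE; lra.
Qed.

Lemma merit_le_residual F (alpha : R) w z : 0 < alpha ->
  merit F C alpha z <= vnorm (w - F z - (z - projC C (z - w))) ^+ 2 / (2 * alpha)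
                       + dotv w (z - projC C (z - w)).
Proof.
move=> alpha0; have [Cp p_obtuse] := projC_spec (z - w) C0 clC cvC.
set p := projC C (z - w) in p_obtuse *; set G := w - F z - (z - p).
apply: ge_sup; first by case: C0 => y Cy; exists (- dotv (F z) (y - z) - alpha / 2 * vnorm (y - z) ^+ 2), y.
move=> _ [y Cy <-].
(* from [<z - w - p, y - p> <= 0] with [y - p = (y - z) + (z - p)] *)
have key : - dotv (F z) (y - z) <= dotv G (y - z) + dotv w (z - p) - dotv (z - p) (z - p).
  move: (p_obtuse _ Cy); rewrite /G !dotvE.
  have := dotvC z p; have := dotvC z y; have := dotvC z w; have := dotvC p y; have := dotvC p w.
  lra.
have := dotv_le G (y - z); have := mul_sub_sqr_le (vnorm G) (vnorm (y - z)) alpha0.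
have := dotvv_ge0 (z - p); lra.
Qed.

End ProjectionResidual.

Section Step.
Variables (R : realType) (n : nat) (C : set 'cV[R]_n).
Variables (F : 'cV[R]_n -> 'cV[R]_n) (JF : 'cV[R]_n -> 'M[R]_n).
Variables (X : set 'cV[R]_n) (xs : 'cV[R]_n) (r L1 L2 mu : R).
Hypotheses (C0 : C !=set0) (clC : closed C) (cvC : convex_set C).
Hypothesis F_C1 : C1_jacobian F JF.
Hypothesis xs_sol : vip_sol F C xs.
Hypothesis X_ball : forall u, vnorm (u - xs) < r -> X u.
Hypothesis F_lip : forall u v, X u -> X v -> vnorm (F u - F v) <= L1 * vnorm (u - v).
Hypothesis JF_lip : forall u v, X u -> X v -> opnorm (JF u - JF v) <= L2 * vnorm (u - v).
Hypothesis JF_coercive : forall u d, X u -> mu * vnorm d ^+ 2 <= dotv (JF u *m d) d.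
Hypotheses (L1_ge0 : 0 <= L1) (L2_gt0 : 0 < L2) (mu_gt0 : 0 < mu).

(* [lin_const] bounds |(B_k + mu_k I) d| / |d| and [step_const] bounds
   |z_k - x_k| / |x_k - xs|; the [merit_c_i] are the coefficients of
   |x_k - xs|^i in the final estimate. *)
Definition lin_const := L1 + 1 + mu.
Definition step_const := 2 * (lin_const + 3 * L1 + 1) / mu + 1.

Lemma lin_const_ge0 : 0 <= lin_const.
Proof. by rewrite /lin_const; move: L1_ge0 mu_gt0; lra. Qed.

Lemma step_const_ge1 : 1 <= step_const.
Proof.
rewrite lerDr; apply: divr_ge0; last exact: ltW.
by move: lin_const_ge0 L1_ge0; lra.
Qed.

Definition residual_const C1 := 2 * L2 * step_const ^+ 2 + 2 * C1 * step_const.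
Definition merit_c4 alpha C1 := residual_const C1 ^+ 2 / alpha + 1.
Definition merit_c3 C1 := 2 * C1 * step_const ^+ 2 + 1.
Definition merit_c2 alpha := step_const ^+ 2 / alpha + 1.

Lemma merit_consts_gt0 alpha C1 : 0 < alpha -> 0 <= C1 ->
  [/\ 0 < merit_c4 alpha C1, 0 < merit_c3 C1 & 0 < merit_c2 alpha].
Proof.
move=> alpha0 C1_ge0; split; apply: ltr_wpDl ltr01.
- by rewrite divr_ge0 ?sqr_ge0 ?ltW.
- by rewrite mulr_ge0 ?sqr_ge0 // mulr_ge0.
- by rewrite divr_ge0 ?sqr_ge0 ?ltW.
Qed.

Section OneStep.
Variables (x z : 'cV[R]_n) (Bm : 'M[R]_n) (m rho del : R).
Hypotheses (m_gt0 : 0 < m) (m_lt : m < mu / 2) (rho_ge0 : 0 <= rho).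
Hypothesis rho_small : rho * (lin_const + 2 + mu) <= 1 / 2.
Hypotheses (del_ge0 : 0 <= del) (del_le : del <= mu / 16).
Hypothesis x_near : vnorm (x - xs) < r.
Hypothesis B_dev : vnorm ((Bm - JF x) *m (z - x)) <= del * vnorm (z - x).

Let ph := phi F Bm m x z.
Let e := z - projC C (z - ph).
Hypothesis e_small : vnorm e <= rho * m * vnorm (z - x).

Let rho_lin : rho * (lin_const + 1) <= 1 / 2.
Proof. by move: rho_small (mulr_ge0 rho_ge0 (ltW mu_gt0)) rho_ge0; lra. Qed.

Let rho_mu : rho * mu <= 1 / 2.
Proof. by move: rho_small (mulr_ge0 rho_ge0 lin_const_ge0) rho_ge0; lra. Qed.

Lemma phi_step_coercive :
  (mu - del) * vnorm (z - x) ^+ 2 <= dotv ((Bm + m%:M) *m (z - x)) (z - x).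
Proof.
rewrite (mulmx_shifted_split _ (JF x)) !dotvDl dotvZl -vnorm_sqr.
have := JF_coercive (z - x) (X_ball x_near).
have := dotv_ge ((Bm - JF x) *m (z - x)) (z - x).
have := ler_wpM2r (vnorm_ge0 (z - x)) B_dev.
have := mulr_ge0 (ltW m_gt0) (sqr_ge0 (vnorm (z - x))).
by rewrite !expr2; lra.
Qed.

Lemma phi_step_bounded : vnorm ((Bm + m%:M) *m (z - x)) <= lin_const * vnorm (z - x).
Proof.
rewrite (mulmx_shifted_split _ (JF x)); apply: le_trans (ler_vnormD _ _) _.
rewrite vnormZ gtr0_norm //.
have := ler_vnormD (JF x *m (z - x)) ((Bm - JF x) *m (z - x)).
have := vnorm_jacobian_le F_C1 X_ball F_lip (z - x) x_near.
have : del + m <= mu by move: del_le m_lt mu_gt0; lra.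
move=> /(ler_wpM2r (vnorm_ge0 (z - x))); move: B_dev; rewrite /lin_const; lra.
Qed.

Lemma step_vi :
  dotv ((Bm + m%:M) *m (z - x) + (F x - F xs) - e) (z - x + (x - xs) - e) <= 0.
Proof.
have := proj_residual_sol_le0 C0 clC cvC ph z xs_sol; rewrite -/e.
have -> : ph - e - F xs = (Bm + m%:M) *m (z - x) + (F x - F xs) - e.
  by rewrite /ph /phi (addrC (F x)) addrAC -(addrA _ (F x)).
suff -> : projC C (z - ph) - xs = z - x + (x - xs) - e by [].
by rewrite /e addrA subrK opprB [RHS]addrC subrKA.
Qed.

Lemma step_quadratic_le : mu / 2 * vnorm (z - x) ^+ 2 <=
  (lin_const + 2 * L1 + 1) * vnorm (x - xs) * vnorm (z - x) + L1 * vnorm (x - xs) ^+ 2.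
Proof.
have := dotv_perturbed_le step_vi; have := phi_step_coercive.
set t := vnorm (z - x); set s := vnorm (x - xs); set eta := rho * m.
set V := (Bm + m%:M) *m (z - x); set G := F x - F xs => coercive bound.
have t0 : 0 <= t := vnorm_ge0 _.
have s0 : 0 <= s := vnorm_ge0 _.
have G_le : vnorm G <= L1 * s.
  by apply: F_lip; apply: X_ball; rewrite // subrr vnorm0 (le_lt_trans (vnorm_ge0 _) x_near).
have eta_le1 : eta <= 1.
  by move: (ler_wpM2l rho_ge0 (ltW m_lt)) rho_mu; rewrite -/eta; lra.
have eta_lin : eta * (lin_const + 1) <= mu / 4.
  by have := ler_wpM2r (ltW m_gt0) rho_lin; rewrite /eta mulrAC; move: m_lt; lra.
have b1 : vnorm V * (s + vnorm e) <= lin_const * t * (s + eta * t).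
  by apply: ler_pM; rewrite ?lerD2l ?addr_ge0 ?vnorm_ge0 ?phi_step_bounded.
have b2 : (vnorm G + vnorm e) * (t + s) <= (L1 * s + eta * t) * (t + s).
  by apply: ler_wpM2r; [apply: addr_ge0 | apply: lerD].
have b3 : vnorm G * vnorm e <= L1 * s * (eta * t) by apply: ler_pM; rewrite ?vnorm_ge0.
have c1 := ler_wpM2r (mulr_ge0 t0 s0) eta_le1.
have c2 := ler_wpM2l (mulr_ge0 (mulr_ge0 L1_ge0 s0) t0) eta_le1.
have c3 := ler_wpM2r (sqr_ge0 t) eta_lin.
have c4 := ler_wpM2r (sqr_ge0 t) del_le.
move: mu_gt0 (mulr_ge0 (ltW mu_gt0) (sqr_ge0 t)); rewrite !expr2 in coercive c3 c4 *.
lra.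
Qed.

Lemma step_dist_le : vnorm (z - x) <= step_const * vnorm (x - xs).
Proof.
rewrite /step_const (_ : lin_const + 3 * L1 + 1 = lin_const + 2 * L1 + 1 + L1); last by ring.
apply: le_of_quadratic_le step_quadratic_le; rewrite ?vnorm_ge0 //.
by move: lin_const_ge0 L1_ge0; lra.
Qed.

Hypothesis e_dot : dotv e (ph + z - x) <= rho * m * vnorm (z - x) ^+ 2.

Lemma dotv_phi_residual_le : dotv ph e <= 2 * rho * m * vnorm (z - x) ^+ 2.
Proof.
move: e_dot; rewrite -addrA dotvDr (dotvC e ph).
have := dotv_ge e (z - x); have := ler_wpM2r (vnorm_ge0 (z - x)) e_small.
by rewrite !expr2; lra.
Qed.

Hypothesis x_near_seg : (step_const + 1) * vnorm (x - xs) < r.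

Lemma phi_residual_le : vnorm (ph - F z - e) <=
  2 * L2 * vnorm (z - x) ^+ 2 + del * vnorm (z - x) + m * vnorm (z - x) + vnorm e.
Proof.
have seg t : 0 <= t <= 1 -> vnorm (x + t *: (z - x) - xs) < r.
  move=> /andP[t0 t1]; rewrite addrAC; apply: le_lt_trans (ler_vnormD _ _) _.
  rewrite vnormZ ger0_norm //; have := step_dist_le.
  have := ler_wpM2r (vnorm_ge0 (z - x)) t1; have := vnorm_ge0 (z - x).
  by move: x_near_seg; lra.
have := taylor_remainder_le F_C1 X_ball JF_lip L2_gt0 seg; rewrite [x + _]addrC subrK.
set T := F z - F x - JF x *m (z - x).
have -> : ph - F z - e = - T + (Bm - JF x) *m (z - x) + m *: (z - x) - e.
  rewrite /ph /phi /T (mulmx_shifted_split _ (JF x)).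
  move: (F z) (F x) (JF x *m _) ((Bm - JF x) *m _) (m *: _) e => a b c d f g.
  by apply/matrixP => i j; rewrite !mxE; lra.
have := ler_vnormD (- T + (Bm - JF x) *m (z - x)) (m *: (z - x)).
have := ler_vnormD (- T) ((Bm - JF x) *m (z - x)).
have := ler_vnormB (- T + (Bm - JF x) *m (z - x) + m *: (z - x)) e.
by rewrite vnormN vnormZ gtr0_norm //; move: B_dev; lra.
Qed.

Section MeritBound.
Variable C1 : R.
Hypothesis m_le : m <= C1 * vnorm (x - xs).

Let rho_le1 : rho <= 1.
Proof. by move: rho_lin (mulr_ge0 rho_ge0 lin_const_ge0); lra. Qed.

Let dist_sqr_le : vnorm (z - x) ^+ 2 <= (step_const * vnorm (x - xs)) ^+ 2.
Proof.
rewrite lerXn2r ?nnegrE ?vnorm_ge0 ?step_dist_le //.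
by rewrite mulr_ge0 ?vnorm_ge0 // (le_trans ler01 step_const_ge1).
Qed.

Lemma residual_poly_le : vnorm (ph - F z - e) <=
  residual_const C1 * vnorm (x - xs) ^+ 2 + step_const * del * vnorm (x - xs).
Proof.
have := ler_pM (ltW m_gt0) (vnorm_ge0 _) m_le step_dist_le.
have := ler_wpM2l (ltW (mulr_gt0 (ltr0Sn _ 1) L2_gt0)) dist_sqr_le.
have := ler_wpM2l del_ge0 step_dist_le.
have := ler_wpM2r (mulr_ge0 (ltW m_gt0) (vnorm_ge0 (z - x))) rho_le1.
have := e_small; have := phi_residual_le.
by rewrite /residual_const !expr2; lra.
Qed.

Lemma dotv_phi_residual_poly_le :
  dotv ph e <= 2 * C1 * step_const ^+ 2 * vnorm (x - xs) ^+ 3.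
Proof.
have := dotv_phi_residual_le.
have := ler_wpM2r (mulr_ge0 (ltW m_gt0) (sqr_ge0 (vnorm (z - x)))) rho_le1.
have := ler_pM (ltW m_gt0) (sqr_ge0 _) m_le dist_sqr_le.
by rewrite !exprS !expr0 !mulr1; lra.
Qed.

Lemma merit_step_le (alpha : R) : 0 < alpha ->
  merit F C alpha z <= merit_c4 alpha C1 * vnorm (x - xs) ^+ 4
    + (del + merit_c3 C1) * vnorm (x - xs) ^+ 3
    + (del + merit_c2 alpha * del ^+ 2) * vnorm (x - xs) ^+ 2.
Proof.
move=> alpha0; have := merit_le_residual C0 clC cvC F ph z alpha0; rewrite -/e.
have := residual_poly_le; have := dotv_phi_residual_poly_le.
set G := vnorm (ph - F z - e); set s := vnorm (x - xs).
set c := step_const; set P := residual_const C1.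
move=> Q_le G_le; have s0 : 0 <= s := vnorm_ge0 _; have G0 : 0 <= G := vnorm_ge0 _.
have G2_le : G ^+ 2 / (2 * alpha) <= P ^+ 2 / alpha * s ^+ 4 + c ^+ 2 / alpha * del ^+ 2 * s ^+ 2.
  have -> : P ^+ 2 / alpha * s ^+ 4 + c ^+ 2 / alpha * del ^+ 2 * s ^+ 2
      = (2 * P ^+ 2 * s ^+ 4 + 2 * c ^+ 2 * del ^+ 2 * s ^+ 2) / (2 * alpha).
    by field; rewrite gt_eqF.
  rewrite ler_pM2r ?invr_gt0 ?mulr_gt0 //.
  have : G ^+ 2 <= (P * s ^+ 2 + c * del * s) ^+ 2.
    by rewrite lerXn2r ?nnegrE //; apply: le_trans G_le.
  by have := sqr_ge0 (P * s ^+ 2 - c * del * s); lra.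
move=> /le_trans; apply.
have := exprn_ge0 4 s0; have := exprn_ge0 3 s0; have := sqr_ge0 s.
have := mulr_ge0 del_ge0 (exprn_ge0 3 s0); have := mulr_ge0 del_ge0 (sqr_ge0 s).
have := mulr_ge0 (sqr_ge0 del) (sqr_ge0 s).
by rewrite /merit_c4 /merit_c3 /merit_c2 -/c -/P; lra.
Qed.

End MeritBound.
End OneStep.
End Step.

Unset Implicit Arguments. Set Strict Implicit.

Theorem mainTheorem5 (R : realType) (n : nat)
  (C : set 'cV[R]_n) (F : 'cV[R]_n -> 'cV[R]_n) (JF : 'cV[R]_n -> 'M[R]_n)
  (xstar : 'cV[R]_n) (X : set 'cV[R]_n) (L1 L2 mu : R)
  (x : nat -> 'cV[R]_n) (B : nat -> 'M[R]_n) (muk rho delta : nat -> R)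
  (z zhat : nat -> 'cV[R]_n) (D C1 C2 : R) :
  C !=set0 -> closed C -> convex_set C ->
  C1_jacobian F JF ->
  vip_sol F C xstar ->
  nbhs xstar X -> 0 < L1 -> 0 < L2 -> 0 < mu ->
  (forall u v, X u -> X v -> vnorm (F u - F v) <= L1 * vnorm (u - v)) ->
  (forall u v, X u -> X v -> opnorm (JF u - JF v) <= L2 * vnorm (u - v)) ->
  (forall u d, X u -> mu * vnorm d ^+ 2 <= dotv (JF u *m d) d) ->
  (forall k, C (x k)) -> x @ \oo --> xstar ->
  (forall k, 0 < muk k) -> (forall k, 0 <= rho k) -> (forall k, 0 < delta k) ->
  (forall k, C (z k) /\
     vnorm (z k - projC C (z k - phi F (B k) (muk k) (x k) (z k)))
       <= rho k * muk k * vnorm (z k - x k) /\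
     dotv (z k - projC C (z k - phi F (B k) (muk k) (x k) (z k)))
          (phi F (B k) (muk k) (x k) (z k) + z k - x k)
       <= rho k * muk k * vnorm (z k - x k) ^+ 2) ->
  (forall k, vip_sol (phi F (B k) (muk k) (x k)) C (zhat k)) ->
  0 < D -> 0 < C1 -> 0 < C2 ->
  (\forall k \near \oo, opnorm (B k - JF (x k)) <= D) ->
  (exists2 M : R, 0 < M &
     \forall k \near \oo, muk k <= M * vnorm (x k - projC C (x k - F (x k)))) ->
  (\forall k \near \oo, muk k <= C1 * vnorm (x k - xstar)) ->
  rho @ \oo --> (0 : R) ->
  (\forall k \near \oo, posdef (B k + (muk k)%:M) /\
     (1 + opnorm (B k + (muk k)%:M)) / min_eig_sym (B k + (muk k)%:M) <= C2) ->
  (\forall k \near \oo,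
     vnorm ((B k - JF (x k)) *m (z k - x k)) <= delta k * vnorm (z k - x k) /\
     muk k < mu / 2 /\ delta k <= mu / 16) ->
  forall alpha : R, 0 < alpha ->
  exists L1' L2' L3' L4' L5' : R,
    [/\ 0 < L1', 0 < L2', 0 < L3', 0 < L4' & 0 < L5'] /\
    \forall k \near \oo,
      merit F C alpha (z k)
        <= L1' * vnorm (x k - xstar) ^+ 4
           + (L2' * delta k + L3') * vnorm (x k - xstar) ^+ 3
           + (L4' * delta k + L5' * delta k ^+ 2) * vnorm (x k - xstar) ^+ 2.
Proof.
move=> C0 clC cvC F_C1 xs_sol nX L1_gt0 L2_gt0 mu_gt0 F_lip JF_lip JF_coercive _ x_cvg
  muk_gt0 rho_ge0 delta_gt0 z_inexact _ _ C1_gt0 _ _ _ muk_le rho_cvg _ step_ev alpha alpha_gt0.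
have [r r_gt0 X_ball] := nbhs_vnorm_ball nX.
pose c := step_const L1 mu; pose K := lin_const L1 mu + 2 + mu.
have [c4_gt0 c3_gt0 c2_gt0] := merit_consts_gt0 L1 L2 mu alpha_gt0 (ltW C1_gt0).
(* the terms linear in [delta k] are not needed; their coefficients are 1 *)
exists (merit_c4 L1 L2 mu alpha C1), 1, (merit_c3 L1 mu C1), 1, (merit_c2 L1 mu alpha).
split; first by split; rewrite ?ltr01.
have c_ge1 : 1 <= c := step_const_ge1 (ltW L1_gt0) mu_gt0.
have c1_gt0 : 0 < c + 1 by lra.
have K_gt0 : 0 < K by rewrite /K /lin_const; lra.
have rho_ev := cvgr_le _ rho_cvg _ (divr_gt0 (divr_gt0 ltr01 (ltr0Sn _ 1)) K_gt0).
have x_ev := cvg_vnorm_lt x_cvg (divr_gt0 r_gt0 c1_gt0).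
near=> k.
have [_ [e_small e_dot]] := z_inexact k.
have [B_dev [m_lt del_le]] : vnorm ((B k - JF (x k)) *m (z k - x k)) <= delta k * vnorm (z k - x k)
  /\ muk k < mu / 2 /\ delta k <= mu / 16 by near: k.
have rho_small : rho k * K <= 1 / 2 by rewrite -ler_pdivlMr //; near: k; apply: rho_ev.
have x_seg : (c + 1) * vnorm (x k - xstar) < r.
  by rewrite mulrC -ltr_pdivlMr //; near: k; apply: x_ev.
have x_near : vnorm (x k - xstar) < r by apply: le_lt_trans x_seg; rewrite ler_peMl ?vnorm_ge0 //; lra.
rewrite !mul1r; apply: (merit_step_le C0 clC cvC F_C1 xs_sol X_ball F_lip JF_lip JF_coercive
  (ltW L1_gt0) L2_gt0 mu_gt0 (muk_gt0 k) m_lt (rho_ge0 k) rho_small (ltW (delta_gt0 k)) del_le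
  x_near B_dev e_small e_dot x_seg _ alpha_gt0).
by near: k.
Unshelve. all: by end_near.
Qed.
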